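(* (a) $\mathcal{A}_<$ is $\boldsymbol{\Sigma}^0_1$ and hence $\mathcal{A}_\ge$ is $\boldsymbol{\Pi}^0_1$; $\mathcal{A}_\le$ is $\boldsymbol{\Pi}^0_2$ and hence $\mathcal{A}_>$ is $\boldsymbol{\Sigma}^0_2$; therefore $\mathcal{A}$ is $\boldsymbol{\Pi}^0_2$. (b) $\mathcal{B}^-_\le$ is $\boldsymbol{\Pi}^0_2$, $\mathcal{B}^-_\ge$ and $\mathcal{B}^+_\ge$ are $\boldsymbol{\Pi}^0_3$, and $\mathcal{B}^+_\le$ is $\boldsymbol{\Pi}^0_4$; therefore $\mathcal{B}^-_>$ is $\boldsymbol{\Sigma}^0_2$, $\mathcal{B}^-_<$ and $\mathcal{B}^+_<$ are $\boldsymbol{\Sigma}^0_3$, and $\mathcal{B}^+_>$ is $\boldsymbol{\Sigma}^0_4$; and $\mathcal{B}$ is $\boldsymbol{\Pi}^0_4$.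
   Context: $2^{\omega}$ is the Cantor space; $N_s=\{x\in2^\omega:s\subset x\}$; $\mu$ is the coin-tossing measure, $\mu(N_s)=2^{-\mathrm{lh}(s)}$. $\mathbf{K}$ is the Polish space of compact subsets of $2^\omega$ with the Vietoris topology; $\omega$ is discrete. For compact $K$ and $z\in2^\omega$: $\mathcal{D}^+_K(z)=\limsup_n\mu(K\cap N_{z\restriction n})/\mu(N_{z\restriction n})$, $\mathcal{D}^-_K(z)=\liminf_n$ of the same, $\mathcal{D}_K(z)$ the limit when it exists. For $\bowtie\in\{<,>,\le,\ge\}$: $\mathcal{A}_\bowtie=\{(K,z,n,r)\in\mathbf{K}\times2^\omega\times\omega\times[0;1]:\mu(K\cap N_{z\restriction n})\bowtie r\}$, $\mathcal{A}=\mathcal{A}_\le\cap\mathcal{A}_\ge$, $\mathcal{B}^\pm_\bowtie=\{(K,z,r)\in\mathbf{K}\times2^\omega\times[0;1]:\mathcal{D}^\pm_K(z)\bowtie r\}$, and $\mathcal{B}=\mathcal{B}^+_\le\cap\mathcal{B}^-_\ge=\{(K,z,r):\mathcal{D}_K(z)=r\}$. *)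

From HB Require Import structures.
From mathcomp Require Import all_boot all_order all_algebra.
From mathcomp Require Import all_classical all_reals all_analysis.
Set Implicit Arguments. Unset Strict Implicit. Unset Printing Implicit Defensive.
Import Order.TTheory GRing.Theory Num.Theory.
Import numFieldNormedType.Exports.
Local Open Scope classical_set_scope.
Local Open Scope ring_scope.

Definition cyl (s : seq bool) : set cantor_space :=
  [set x | forall i, (i < size s)%N -> x i = nth false s i].

Definition restr (z : cantor_space) (n : nat) : seq bool := mkseq z n.

Section Defs.
Context {R : realType}.

(** The coin-tossing measure mu (as the Caratheodory outer measure generated by
    mu(N_s) = 2^-lh(s) on basic cylinders; it agrees with the coin-tossing
    Borel measure on all Borel sets, in particular on all sets used below). *)
Definition mu (A : set cantor_space) : \bar R :=
  ereal_inf [set (\sum_(0 <= i <oo) ((2 ^- size (c i) : R)%:E))%E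
            | c in [set c : nat -> seq bool | A `<=` \bigcup_i cyl (c i)]].

Definition Kspace := {K : set cantor_space | compact K}.

Definition I01 := {r : R | 0 <= r <= 1}.

End Defs.
Arguments I01 R : clear implicits.

Section Hierarchy.
Context {T : Type}.

Definition gen_open (S : set (set T)) (A : set T) : Prop :=
  forall x, A x -> exists n (F : nat -> set T),
    (forall i, (i < n)%N -> S (F i) /\ F i x) /\
    (forall y, (forall i, (i < n)%N -> F i y) -> A y).

(** SigmaAux O m = Sigma^0_(m+1) of the topology whose open sets are O. *)
Fixpoint SigmaAux (O : set (set T)) (m : nat) : set (set T) :=
  match m with
  | 0 => O
  | m.+1 => [set A | exists F : nat -> set T,
                (forall i, SigmaAux O m (~` F i)) /\ A = \bigcup_i F i]
  end.

(** Sigma^0_n and Pi^0_n, for n >= 1. *)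
Definition Sigma0 (O : set (set T)) (n : nat) : set (set T) := SigmaAux O n.-1.
Definition Pi0 (O : set (set T)) (n : nat) : set (set T) :=
  [set A | Sigma0 O n (~` A)].
End Hierarchy.

Definition vietoris_sub : set (set Kspace) :=
  [set V | exists U : set cantor_space, open U /\
     (V = [set K : Kspace | proj1_sig K `<=` U] \/
      V = [set K : Kspace | proj1_sig K `&` U !=set0])].

Section Spaces.
Context {R : realType}.

(** K x 2^omega x omega x [0;1] with the product topology (omega discrete,
    [0;1] with the subspace topology of R). *)
Definition XA := (Kspace * cantor_space * nat * I01 R)%type.

Definition XA_sub : set (set XA) :=
  [set V | (exists W, vietoris_sub W /\ V = [set p : XA | W p.1.1.1])
        \/ (exists U : set cantor_space, open U /\ V = [set p : XA | U p.1.1.2])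
        \/ (exists N : set nat, V = [set p : XA | N p.1.2])
        \/ (exists U : set R, open U /\ V = [set p : XA | U (proj1_sig p.2)])].

Definition XA_open : set (set XA) := gen_open XA_sub.

Definition XB := (Kspace * cantor_space * I01 R)%type.

Definition XB_sub : set (set XB) :=
  [set V | (exists W, vietoris_sub W /\ V = [set p : XB | W p.1.1])
        \/ (exists U : set cantor_space, open U /\ V = [set p : XB | U p.1.2])
        \/ (exists U : set R, open U /\ V = [set p : XB | U (proj1_sig p.2)])].

Definition XB_open : set (set XB) := gen_open XB_sub.

Local Notation muKN p := (@mu R (proj1_sig p.1.1.1 `&` cyl (restr p.1.1.2 p.1.2))).

Definition A_lt : set XA := [set p | (muKN p < (proj1_sig p.2)%:E)%E].
Definition A_gt : set XA := [set p | (muKN p > (proj1_sig p.2)%:E)%E].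
Definition A_le : set XA := [set p | (muKN p <= (proj1_sig p.2)%:E)%E].
Definition A_ge : set XA := [set p | (muKN p >= (proj1_sig p.2)%:E)%E].
Definition A_eq : set XA := A_le `&` A_ge.

Definition dratio (K : set cantor_space) (z : cantor_space) (n : nat) : \bar R :=
  (fine (@mu R (K `&` cyl (restr z n))) / fine (@mu R (cyl (restr z n))))%:E.

Definition Dplus (K : set cantor_space) (z : cantor_space) : \bar R :=
  limn_esup (dratio K z).
Definition Dminus (K : set cantor_space) (z : cantor_space) : \bar R :=
  limn_einf (dratio K z).

Definition Bplus_lt : set XB := [set p | (Dplus (proj1_sig p.1.1) p.1.2 < (proj1_sig p.2)%:E)%E].
Definition Bplus_gt : set XB := [set p | (Dplus (proj1_sig p.1.1) p.1.2 > (proj1_sig p.2)%:E)%E].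
Definition Bplus_le : set XB := [set p | (Dplus (proj1_sig p.1.1) p.1.2 <= (proj1_sig p.2)%:E)%E].
Definition Bplus_ge : set XB := [set p | (Dplus (proj1_sig p.1.1) p.1.2 >= (proj1_sig p.2)%:E)%E].
Definition Bminus_lt : set XB := [set p | (Dminus (proj1_sig p.1.1) p.1.2 < (proj1_sig p.2)%:E)%E].
Definition Bminus_gt : set XB := [set p | (Dminus (proj1_sig p.1.1) p.1.2 > (proj1_sig p.2)%:E)%E].
Definition Bminus_le : set XB := [set p | (Dminus (proj1_sig p.1.1) p.1.2 <= (proj1_sig p.2)%:E)%E].
Definition Bminus_ge : set XB := [set p | (Dminus (proj1_sig p.1.1) p.1.2 >= (proj1_sig p.2)%:E)%E].
Definition B_eq : set XB := Bplus_le `&` Bminus_ge.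

End Spaces.
Arguments XA R : clear implicits.
Arguments XB R : clear implicits.

From HB Require Import structures.
From mathcomp Require Import all_boot all_order all_algebra.
From mathcomp Require Import all_classical all_reals all_analysis.
From mathcomp Require Import ring lra.
Set Implicit Arguments. Unset Strict Implicit. Unset Printing Implicit Defensive.
Import Order.TTheory GRing.Theory Num.Theory.
Import numFieldNormedType.Exports.
Local Open Scope classical_set_scope.
Local Open Scope ring_scope.

(** For compact K, mu(K ∩ N_s) < t iff K ∩ N_s is covered by finitely many
    cylinders of total weight < t.  A finite union U of cylinders is clopen, so
    both {K | K ∩ N_s ⊆ U} and its complement are Vietoris open.  Hence every
    strict sublevel set of (K, z, n) ↦ mu(K ∩ N_{z|n}), and of each density
    ratio n ↦ mu(K ∩ N_{z|n}) / mu(N_{z|n}), is a countable union of clopen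
    sets and lies in every Σ^0_k.  Each set of the lemma is then obtained by
    comparing such functions with the continuous coordinate r through rational
    quantifiers, e.g. D^-_K(z) < r iff ∃ q < r, ∀ m, ∃ n ≥ m, ratio_n < q, and
    counting quantifier alternations. *)

(** * Cylinders and the coin-tossing outer measure *)

Lemma cyl_clopen (s : seq bool) : clopen (cyl s).
Proof.
rewrite [cyl s](_ : _ =
  \bigcap_(i < size s) ((fun x : cantor_space => x i) @^-1` [set nth false s i])) //.
rewrite bigcap_mkord; elim/big_ind: _ => [|A B|i _]; [exact: clopenT|exact: clopenI|].
apply: preimage_clopen; last exact: proj_continuous.
by split; [exact: discrete_open|exact: discrete_closed].
Qed.

Lemma restr_eqP (z : cantor_space) n s : restr z n = s <-> cyl s z /\ size s = n.
Proof.
split=> [<-|[zs <-]].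
  by split; [move=> i; rewrite size_mkseq => ilt; rewrite nth_mkseq|exact: size_mkseq].
apply: (@eq_from_nth _ false); rewrite size_mkseq // => i ilt.
by rewrite nth_mkseq // zs.
Qed.

Definition cyl_cover (L : seq (seq bool)) : set cantor_space :=
  \big[setU/set0]_(s <- L) cyl s.

Lemma cyl_coverE L : cyl_cover L = [set x | exists2 s, s \in L & cyl s x].
Proof. by rewrite /cyl_cover -bigcup_seq. Qed.

Lemma cyl_cover_clopen L : clopen (cyl_cover L).
Proof.
rewrite /cyl_cover; elim/big_ind: _ => [|A B|s _].
- exact: clopen0.
- exact: clopenU.
- exact: cyl_clopen.
Qed.

Section CoinTossing.
Context {R : realType}.
Local Notation mu := (@mu R).

Definition cyl_weight (L : seq (seq bool)) : R := \sum_(s <- L) 2 ^- size s.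

Lemma mu_ge0 A : (0 <= mu A)%E.
Proof.
apply: le_ereal_inf_tmp => _ [c _ <-]; apply: nneseries_ge0 => n _ _.
by rewrite lee_fin invr_ge0 exprn_ge0.
Qed.

Lemma sum_pow2_le k N : \sum_(i < N) (2 ^- (i + k).+1 : R) <= 2 ^- k.
Proof.
elim: N k => [|N IH] k; first by rewrite big_ord0 invr_ge0 exprn_ge0.
rewrite big_ord_recl add0n.
under eq_bigr do rewrite lift0 addSnnS.
have := IH k.+1; have -> : (2 ^- k : R) = 2 ^- k.+1 + 2 ^- k.+1.
  by rewrite exprSr invfM; field.
by move=> h; rewrite lerD2l.
Qed.

Lemma mu_le_weight A L : A `<=` cyl_cover L -> (mu A <= (cyl_weight L)%:E)%E.
Proof.
move=> AL; apply/lee_addgt0Pr => e e0.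
have [k _ /(_ k (leqnn k))] := near_infty_natSinv_expn_lt (PosNum e0).
rewrite /= mul1r => ke.
(* The infimum defining mu ranges over infinite sequences of cylinders: pad L
   with cylinders of total weight below e. *)
pose c i := if (i < size L)%N then nth [::] L i else nseq (i + k).+1 false.
apply: (@le_trans _ _ (\sum_(0 <= i <oo) ((2 ^- size (c i) : R))%:E)%E).
  apply: ereal_inf_lbound; exists c => // x /AL; rewrite cyl_coverE => -[s sL sx].
  by exists (index s L) => //; rewrite /c index_mem sL nth_index.
apply: lime_le.
  by apply: is_cvg_nneseries => n _ _; rewrite lee_fin invr_ge0 exprn_ge0.
near=> N; rewrite sumEFin lee_fin.
have LN : (size L <= N)%N by near: N; exists (size L).
rewrite (big_cat_nat (leq0n _) LN) /= lerD //.
  rewrite /cyl_weight (big_nth [::]) le_eqVlt; apply/orP; left.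
  by apply/eqP/eq_big_nat => i /andP[_ iL]; rewrite /c iL.
apply: (le_trans _ (ltW ke)); apply: (le_trans _ (sum_pow2_le k N)).
rewrite -(big_mkord xpredT (fun i => 2 ^- (i + k).+1)).
rewrite (big_cat_nat (leq0n (size L)) LN) /=; apply: ler_wpDl.
  by rewrite sumr_ge0 // => i _; rewrite invr_ge0 exprn_ge0.
apply: ler_sum_nat => i /andP[]; rewrite leqNgt /c => /negbTE -> _.
by rewrite size_nseq.
Unshelve. all: by end_near. Qed.

Lemma mu_le1 A : (mu A <= 1)%E.
Proof.
have -> : (1 : R) = cyl_weight [:: [::]] by rewrite /cyl_weight big_seq1 expr0 invr1.
by apply: mu_le_weight => x _; rewrite cyl_coverE; exists [::] => //; rewrite mem_seq1.
Qed.

Lemma muEfine A : mu A = (fine (mu A))%:E.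
Proof.
by rewrite fineK // ge0_fin_numE ?mu_ge0 // (le_lt_trans (mu_le1 A)) ?ltey.
Qed.

Lemma fine_mu_le_weight A L : A `<=` cyl_cover L -> fine (mu A) <= cyl_weight L.
Proof. by move=> AL; rewrite -lee_fin -muEfine; exact: mu_le_weight. Qed.

Lemma compact_fine_mu_lt A t : compact A -> fine (mu A) < t ->
  exists2 L, A `<=` cyl_cover L & cyl_weight L < t.
Proof.
rewrite -lte_fin -muEfine => cA /ereal_inf_lt [_ [cc Acc <-]] cct.
have cyl_open i : open (cyl (cc i)) by have [] := cyl_clopen (cc i).
move: cA; rewrite compact_cover => /(_ nat setT (cyl \o cc) (fun i _ => cyl_open i)).
case=> [x /Acc [i _ ?]|D _ AD]; first by exists i.
have [N DN] : exists N, forall i, i \in finmap.enum_fset D -> (i < N)%N.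
  by exists (\max_(j <- finmap.enum_fset D) j).+1 => i iD; rewrite ltnS leq_bigmax_seq.
exists (mkseq cc N).
  move=> x /AD [i /= /DN iN xi]; rewrite cyl_coverE.
  by exists (cc i) => //; apply/mapP; exists i; rewrite ?mem_iota.
rewrite -lte_fin; apply: le_lt_trans cct.
rewrite /cyl_weight big_map -sumEFin -[N in iota 0 N]subn0.
by apply: nneseries_lim_ge => n _ _; rewrite lee_fin invr_ge0 exprn_ge0.
Qed.

End CoinTossing.

(** * The finite Borel hierarchy of a topology given by a subbasis *)

Section GeneratedTopology.
Context {T : Type} (S : set (set T)).
Local Notation O := (gen_open S).

Lemma gen_open_sub V : S V -> O V.
Proof. by move=> SV x Vx; exists 1%N, (fun _ => V); split => [i _|y /(_ 0%N)]; [|apply]. Qed.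

Lemma gen_open_const (P : Prop) : O [set _ | P].
Proof. by move=> x Px; exists 0%N, (fun _ => setT). Qed.

Lemma gen_openI A B : O A -> O B -> O (A `&` B).
Proof.
move=> oA oB x [Ax Bx].
have [n1 [F1 [F1x F1A]]] := oA x Ax; have [n2 [F2 [F2x F2B]]] := oB x Bx.
exists (n1 + n2)%N, (fun i => if (i < n1)%N then F1 i else F2 (i - n1)%N); split.
  move=> i ilt; case: ifPn => [|/negbTE]; first exact: F1x.
  by rewrite ltnNge => /negbFE n1i; apply: F2x; rewrite ltn_subLR.
move=> y Fy; split.
  by apply: F1A => i ilt; have := Fy i (ltn_addr _ ilt); rewrite ilt.
apply: F2B => i ilt; have := Fy (n1 + i)%N.
by rewrite ltn_add2l ilt ltnNge leq_addr addKn; apply.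
Qed.

Lemma gen_open_bigcup (I : Type) (D : set I) (F : I -> set T) :
  (forall i, D i -> O (F i)) -> O (\bigcup_(i in D) F i).
Proof.
move=> oF x [i Di Fix]; have [n [G [Gx GF]]] := oF i Di x Fix.
by exists n, G; split => // y /GF; exists i.
Qed.

Definition gen_clopen (A : set T) := O A /\ O (~` A).

Lemma gen_clopen_const (P : Prop) : gen_clopen [set _ | P].
Proof. by split; [|rewrite -[X in O X]/[set _ | ~ P]]; exact: gen_open_const. Qed.

Lemma gen_clopenI A B : gen_clopen A -> gen_clopen B -> gen_clopen (A `&` B).
Proof.
move=> [oA oCA] [oB oCB]; split; first exact: gen_openI.
by rewrite setCI -bigcup2inE; apply: gen_open_bigcup => -[|[|]].
Qed.

Lemma gen_clopenC A : gen_clopen A -> gen_clopen (~` A).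
Proof. by rewrite /gen_clopen setCK => -[]. Qed.

Lemma gen_clopenU A B : gen_clopen A -> gen_clopen B -> gen_clopen (A `|` B).
Proof.
move=> /gen_clopenC cA /gen_clopenC cB.
by rewrite -[_ `|` _]setCK setCU; apply/gen_clopenC/gen_clopenI.
Qed.

Lemma Sigma0_clopen n A : gen_clopen A -> Sigma0 O n.+1 A.
Proof.
elim: n A => [|n IH] A cA; first by case: cA.
exists (fun _ => A); split; first by move=> _; apply/IH/gen_clopenC.
by rewrite bigcup_const.
Qed.

Lemma Sigma0_bigcup_Pi0 (I : countType) n (F : I -> set T) :
  (forall i, Pi0 O n.+1 (F i)) -> Sigma0 O n.+2 (\bigcup_i F i).
Proof.
move=> PF; exists (fun k => if unpickle k is Some i then F i else set0); split.
  move=> k; case: (unpickle k) => [i|]; first exact: PF.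
  by rewrite setC0; apply/Sigma0_clopen/gen_clopen_const.
apply/seteqP; split => [x [i _ Fix]|x [k _]].
  by exists (pickle i) => //; rewrite pickleK.
by case: (unpickle k) => // i Fix; exists i.
Qed.

Lemma Pi0_Sigma0S n A : Pi0 O n.+1 A -> Sigma0 O n.+2 A.
Proof.
by move=> PA; rewrite -(@bigcup_const _ unit setT A); [apply: Sigma0_bigcup_Pi0|exists tt].
Qed.

Lemma Sigma0_Pi0S n A : Sigma0 O n.+1 A -> Pi0 O n.+2 A.
Proof. by move=> SA; apply: Pi0_Sigma0S; rewrite /Pi0 /= setCK. Qed.

Lemma Pi0_setC n A : Sigma0 O n A -> Pi0 O n (~` A).
Proof. by rewrite /Pi0 /= setCK. Qed.

Lemma Sigma0_bigcup (I : countType) (D : set I) n (F : I -> set T) :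
  (forall i, D i -> Sigma0 O n.+1 (F i)) -> Sigma0 O n.+1 (\bigcup_(i in D) F i).
Proof.
case: n => [|n] SF; first exact: gen_open_bigcup.
rewrite bigcup_mkcond.
have /choice [G FG] : forall i, exists G : nat -> set T,
    (forall j, Pi0 O n.+1 (G j)) /\ (if i \in D then F i else set0) = \bigcup_j G j.
  move=> i; case: ifPn => [/set_mem /SF [G [PG ->]]|_]; first by exists G.
  exists (fun _ => set0); split; last by rewrite bigcup0.
  by move=> _; apply/Sigma0_clopen/gen_clopenC/gen_clopen_const.
rewrite (_ : \bigcup_i _ = \bigcup_(ij : I * nat) G ij.1 ij.2).
  by apply: Sigma0_bigcup_Pi0 => -[i j]; exact: (FG i).1.
apply/seteqP; split => [x [i _]|x [[i j] _ Gx]].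
  by case: (FG i) => _ -> [j _ Gx]; exists (i, j).
by exists i => //; case: (FG i) => _ ->; exists j.
Qed.

Lemma Pi0_bigcap (I : countType) (D : set I) n (F : I -> set T) :
  (forall i, D i -> Pi0 O n.+1 (F i)) -> Pi0 O n.+1 (\bigcap_(i in D) F i).
Proof. by move=> PF; rewrite /Pi0 /= setC_bigcap; exact: Sigma0_bigcup. Qed.

Lemma Sigma0_setU n A B :
  Sigma0 O n.+1 A -> Sigma0 O n.+1 B -> Sigma0 O n.+1 (A `|` B).
Proof.
by move=> SA SB; rewrite -bigcup2inE; apply: Sigma0_bigcup => -[|[|]].
Qed.

Lemma Sigma0_setI n A B :
  Sigma0 O n.+1 A -> Sigma0 O n.+1 B -> Sigma0 O n.+1 (A `&` B).
Proof.
case: n => [|n]; first exact: gen_openI.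
move=> [F [PF ->]] [G [PG ->]]; rewrite setI_bigcupl.
apply: Sigma0_bigcup => i _; rewrite setI_bigcupr; apply: Sigma0_bigcup => j _.
by apply: Pi0_Sigma0S; rewrite /Pi0 /= setCI; apply: Sigma0_setU; [exact: PF|exact: PG].
Qed.

Lemma Pi0_setI n A B : Pi0 O n.+1 A -> Pi0 O n.+1 B -> Pi0 O n.+1 (A `&` B).
Proof. by rewrite /Pi0 /= setCI; exact: Sigma0_setU. Qed.

Lemma Pi0_le d (X : orderType d) (a b : T -> X) n :
  Sigma0 O n [set x | (b x < a x)%O] -> Pi0 O n [set x | (a x <= b x)%O].
Proof.
rewrite /Pi0 /= (_ : ~` _ = [set x | (b x < a x)%O]) //.
by apply/seteqP; split => x /=; rewrite ltNge => /negP.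
Qed.

End GeneratedTopology.

(** * Liminf, limsup and semicontinuous functions in the hierarchy *)

Section LiminfLimsupRat.
Context {R : realType}.
Implicit Types (u : nat -> R) (x : R).
Local Open Scope ereal_scope.

Lemma ereal_rat_between (x y : \bar R) : x < y -> exists q : rat, x < (ratr q)%:E < y.
Proof.
have ratP (a b : R) : (a < b)%R -> exists q : rat, (a < ratr q < b)%R.
  by move=> /rat_in_itvoo [q]; rewrite in_itv /=; exists q.
case: x => [a||]; case: y => [b||] //= xy.
- by have [q] := ratP _ _ xy; exists q; rewrite !lte_fin.
- have [q /andP[aq _]] := ratP a (a + 1)%R ltac:(lra).
  by exists q; rewrite lte_fin aq ltey.
- have [q /andP[_ qb]] := ratP (b - 1)%R b ltac:(lra).
  by exists q; rewrite lte_fin qb ltNye.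
- by have [q _] := ratP 0%R 1%R ltr01; exists q; rewrite ltey ltNye.
Qed.

Let liminfE u : limn_einf (fun n => (u n)%:E) =
  ereal_sup (range (einfs (fun n => (u n)%:E))).
Proof. by rewrite limn_einf_lim; apply: cvg_lim => //; exact: cvg_einfs_sup. Qed.

Let limsupE u : limn_esup (fun n => (u n)%:E) =
  ereal_inf (range (esups (fun n => (u n)%:E))).
Proof. by rewrite limn_esup_lim; apply: cvg_lim => //; exact: cvg_esups_inf. Qed.

Lemma lt_limn_einfP u x : x%:E < limn_einf (fun n => (u n)%:E) <->
  exists q : rat, (x < ratr q)%R /\ exists m, forall n, (m <= n)%N -> (ratr q <= u n)%R.
Proof.
rewrite liminfE; split => [/ereal_rat_between [q /andP[xq]]|[q [xq [m qu]]]].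
  move=> /ereal_sup_gt [_ [m _ <-]] qm; exists q; split; first by rewrite -lte_fin.
  exists m => n mn; rewrite -lee_fin (le_trans (ltW qm)) //.
  by apply: ereal_inf_lbound; exists n.
apply: (lt_le_trans (_ : _ < (ratr q)%:E)); first by rewrite lte_fin.
apply: (le_trans _ (ereal_sup_ubound (ex_intro2 _ _ m I erefl))).
by apply: le_ereal_inf_tmp => _ [n mn <-]; rewrite lee_fin qu.
Qed.

Lemma limn_einf_ltP u x : limn_einf (fun n => (u n)%:E) < x%:E <->
  exists q : rat, (ratr q < x)%R /\ forall m, exists2 n, (m <= n)%N & (u n < ratr q)%R.
Proof.
rewrite liminfE; split => [/ereal_rat_between [q /andP[liq qx]]|[q [qx uq]]].
  exists q; split => [|m]; first by rewrite -lte_fin.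
  have : einfs (fun n => (u n)%:E) m < (ratr q)%:E.
    by apply: le_lt_trans liq; apply: ereal_sup_ubound; exists m.
  by move=> /ereal_inf_lt [_ [n mn <-]]; rewrite lte_fin; exists n.
apply: (le_lt_trans (_ : _ <= (ratr q)%:E)); last by rewrite lte_fin.
apply: ge_ereal_sup => _ [m _ <-]; have [n mn unq] := uq m.
by apply: (le_trans (ereal_inf_lbound (ex_intro2 _ _ n mn erefl))); rewrite lee_fin ltW.
Qed.

Lemma limn_esup_ltP u x : limn_esup (fun n => (u n)%:E) < x%:E <->
  exists q : rat, (ratr q < x)%R /\ exists m, forall n, (m <= n)%N -> (u n < ratr q)%R.
Proof.
rewrite limsupE; split => [/ereal_rat_between [q /andP[lsq qx]]|[q [qx [m uq]]]].
  move: lsq => /ereal_inf_lt [_ [m _ <-]] mq; exists q; split; first by rewrite -lte_fin.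
  exists m => n mn; rewrite -lte_fin (le_lt_trans _ mq) //.
  by apply: ereal_sup_ubound; exists n.
apply: (le_lt_trans (_ : _ <= (ratr q)%:E)); last by rewrite lte_fin.
apply: (le_trans (ereal_inf_lbound (ex_intro2 _ _ m I erefl))).
by apply: ge_ereal_sup => _ [n mn <-]; rewrite lee_fin ltW ?uq.
Qed.

Lemma lt_limn_esupP u x : x%:E < limn_esup (fun n => (u n)%:E) <->
  exists q : rat, (x < ratr q)%R /\ forall m, exists2 n, (m <= n)%N & (ratr q < u n)%R.
Proof.
rewrite limsupE; split => [/ereal_rat_between [q /andP[xq qls]]|[q [xq qu]]].
  exists q; split => [|m]; first by rewrite -lte_fin.
  have : (ratr q)%:E < esups (fun n => (u n)%:E) m.
    by apply: lt_le_trans qls _; apply: ereal_inf_lbound; exists m.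
  by move=> /ereal_sup_gt [_ [n mn <-]]; rewrite lte_fin; exists n.
apply: (lt_le_trans (_ : _ < (ratr q)%:E)); first by rewrite lte_fin.
apply: le_ereal_inf_tmp => _ [m _ <-]; have [n mn qun] := qu m.
by apply: (le_trans _ (ereal_sup_ubound (ex_intro2 _ _ n mn erefl))); rewrite lee_fin ltW.
Qed.

End LiminfLimsupRat.

Section SemicontinuousComparisons.
Context {R : realType} {T : Type} (S : set (set T)).
Local Notation O := (gen_open S).

(* Open sets need not be F_sigma for a topology given by an arbitrary subbasis,
   so the hierarchy is not known to be cumulative: the lemmas below therefore
   place each set in Σ^0_(k+n) for every n, not only in Σ^0_k. *)
Definition Sigma_usc (h : T -> R) := forall t n, Sigma0 O n.+1 [set x | h x < t].
Definition Sigma_lsc (h : T -> R) := forall t n, Sigma0 O n.+1 [set x | t < h x].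

Lemma lt_bigcup_rat (a b : T -> R) : [set x | a x < b x] =
  \bigcup_(q : rat) ([set x | a x < ratr q] `&` [set x | ratr q < b x]).
Proof.
apply/seteqP; split => [x /rat_in_itvoo [q]|x [q _ [/= aq qb]]]; last exact: lt_trans aq qb.
by rewrite in_itv /= => /andP[aq qb]; exists q.
Qed.

Lemma lt_bigcup_ratC (h : T -> R) t :
  [set x | h x < t] = \bigcup_(q in [set q : rat | ratr q < t]) ~` [set x | ratr q < h x].
Proof.
apply/seteqP; split => [x /rat_in_itvoo [q]|x [q /= qt /negP]]; last first.
  by rewrite -leNgt => /le_lt_trans; apply.
by rewrite in_itv /= => /andP[hq qt]; exists q => //=; apply/negP; rewrite -leNgt ltW.
Qed.

Lemma gt_bigcup_ratC (h : T -> R) t :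
  [set x | t < h x] = \bigcup_(q in [set q : rat | t < ratr q]) ~` [set x | h x < ratr q].
Proof.
apply/seteqP; split => [x /rat_in_itvoo [q]|x [q /= tq /negP]]; last first.
  by rewrite -leNgt; apply: lt_le_trans.
by rewrite in_itv /= => /andP[tq qh]; exists q => //=; apply/negP; rewrite -leNgt ltW.
Qed.

Lemma open_Sigma_semicontinuous (g : T -> R) :
  (forall t, O [set x | g x < t]) -> (forall t, O [set x | t < g x]) ->
  Sigma_usc g /\ Sigma_lsc g.
Proof.
move=> gl gr; suff H n t : Sigma0 O n.+1 [set x | g x < t] /\ Sigma0 O n.+1 [set x | t < g x].
  by split => t n; have [] := H n t.
elim: n t => [|n IH] t; first by split; [exact: gl|exact: gr].
rewrite lt_bigcup_ratC gt_bigcup_ratC.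
split; apply: Sigma0_bigcup => q _; apply/Pi0_Sigma0S/Pi0_setC.
- exact: (IH _).2.
- exact: (IH _).1.
Qed.

Lemma Sigma_usc_gt h : Sigma_usc h -> forall t n, Sigma0 O n.+2 [set x | t < h x].
Proof.
move=> hu t n; rewrite gt_bigcup_ratC.
by apply: Sigma0_bigcup => q _; apply/Pi0_Sigma0S/Pi0_setC.
Qed.

Variable g : T -> R.
Hypotheses (g_usc : Sigma_usc g) (g_lsc : Sigma_lsc g).

Lemma lt_Sigma0 h : Sigma_usc h -> forall n, Sigma0 O n.+1 [set x | h x < g x].
Proof.
by move=> hu n; rewrite lt_bigcup_rat; apply: Sigma0_bigcup => q _; apply: Sigma0_setI.
Qed.

Lemma gt_Sigma0 h : Sigma_usc h -> forall n, Sigma0 O n.+2 [set x | g x < h x].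
Proof.
move=> hu n; rewrite lt_bigcup_rat; apply: Sigma0_bigcup => q _.
by apply: Sigma0_setI; [exact: g_usc|exact: Sigma_usc_gt].
Qed.

Variable f : nat -> T -> R.
Hypothesis f_usc : forall k, Sigma_usc (f k).
Local Notation liminf x := (limn_einf (fun k => (f k x)%:E)).
Local Notation limsup x := (limn_esup (fun k => (f k x)%:E)).

Lemma lt_liminf_Sigma0 n : Sigma0 O n.+2 [set x | ((g x)%:E < liminf x)%E].
Proof.
rewrite (_ : [set x | _] = \bigcup_(q : rat) ([set x | g x < ratr q] `&`
    \bigcup_(m : nat) \bigcap_(k in [set k | (m <= k)%N]) ~` [set x | f k x < ratr q])).
  apply: Sigma0_bigcup => q _; apply: Sigma0_setI => //.
  apply: Sigma0_bigcup => m _; apply/Pi0_Sigma0S/Pi0_bigcap => k _.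
  exact/Pi0_setC/f_usc.
apply/seteqP; split => [x /lt_limn_einfP [q [gq [m qf]]]|x [q _ [gq [m _ fq]]]].
  by exists q => //; split => //; exists m => // k /qf; rewrite leNgt => /negP.
apply/lt_limn_einfP; exists q; split => //; exists m => k mk.
by rewrite leNgt; apply/negP; exact: fq.
Qed.

Lemma liminf_lt_Sigma0 n : Sigma0 O n.+3 [set x | (liminf x < (g x)%:E)%E].
Proof.
rewrite (_ : [set x | _] = \bigcup_(q : rat) ([set x | ratr q < g x] `&`
    \bigcap_(m : nat) \bigcup_(k in [set k | (m <= k)%N]) [set x | f k x < ratr q])).
  apply: Sigma0_bigcup => q _; apply/Pi0_Sigma0S/Pi0_setI; first exact: Sigma0_Pi0S.
  by apply: Pi0_bigcap => m _; apply/Sigma0_Pi0S/Sigma0_bigcup => k _; exact: f_usc.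
apply/seteqP; split => [x /limn_einf_ltP [q [qg fq]]|x [q _ [qg fq]]].
  by exists q => //; split => // m _; have [k mk ?] := fq m; exists k.
by apply/limn_einf_ltP; exists q; split => // m; have [k ? ?] := fq m I; exists k.
Qed.

Lemma limsup_lt_Sigma0 n : Sigma0 O n.+3 [set x | (limsup x < (g x)%:E)%E].
Proof.
rewrite (_ : [set x | _] = \bigcup_(q : rat) ([set x | ratr q < g x] `&`
    \bigcup_(m : nat) \bigcap_(k in [set k | (m <= k)%N]) [set x | f k x < ratr q])).
  apply: Sigma0_bigcup => q _; apply: Sigma0_setI => //.
  apply: Sigma0_bigcup => m _; apply/Pi0_Sigma0S/Pi0_bigcap => k _.
  exact/Sigma0_Pi0S/f_usc.
apply/seteqP; split => [x /limn_esup_ltP [q [qg [m fq]]]|x [q _ [qg [m _ fq]]]].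
  by exists q => //; split => //; exists m.
by apply/limn_esup_ltP; exists q; split => //; exists m.
Qed.

Lemma lt_limsup_Sigma0 n : Sigma0 O n.+4 [set x | ((g x)%:E < limsup x)%E].
Proof.
rewrite (_ : [set x | _] = \bigcup_(q : rat) ([set x | g x < ratr q] `&`
    \bigcap_(m : nat) \bigcup_(k in [set k | (m <= k)%N]) [set x | ratr q < f k x])).
  apply: Sigma0_bigcup => q _; apply/Pi0_Sigma0S/Pi0_setI; first exact: Sigma0_Pi0S.
  apply: Pi0_bigcap => m _; apply/Sigma0_Pi0S/Sigma0_bigcup => k _.
  exact: Sigma_usc_gt.
apply/seteqP; split => [x /lt_limn_esupP [q [gq qf]]|x [q _ [gq qf]]].
  by exists q => //; split => // m _; have [k mk ?] := qf m; exists k.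
by apply/lt_limn_esupP; exists q; split => // m; have [k ? ?] := qf m I; exists k.
Qed.

End SemicontinuousComparisons.

(** * Upper semicontinuity of the measure of compact sets *)

Section MeasureSemicontinuity.
Context {R : realType} {T : Type} (S : set (set T)).
Variables (K : T -> set cantor_space) (sigma : T -> seq bool) (c : seq bool -> R).
Hypothesis K_compact : forall x, compact (K x).
Hypothesis K_vietoris : forall U, open U ->
  gen_open S [set x | K x `<=` U] /\ gen_open S [set x | K x `&` U !=set0].
Hypothesis sigma_clopen : forall s, gen_clopen S [set x | sigma x = s].
Hypothesis c_ge0 : forall s, 0 <= c s.

Lemma cyl_cover_gen_clopen s L : gen_clopen S [set x | K x `&` cyl s `<=` cyl_cover L].
Proof.
have [[oc cc] [oL cL]] := (cyl_clopen s, cyl_cover_clopen L).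
split.
  rewrite (_ : [set x | _] = [set x | K x `<=` cyl_cover L `|` ~` cyl s]).
    by apply: (K_vietoris _).1; apply: openU => //; rewrite openC.
  apply/seteqP; split => x KL y Ky; last by case: (KL y Ky.1) => // /(_ Ky.2).
  by have [sy|] := pselect (cyl s y); [left; exact: KL|right].
rewrite (_ : ~` _ = [set x | K x `&` (cyl s `&` ~` cyl_cover L) !=set0]).
  by apply: (K_vietoris _).2; apply: openI => //; rewrite openC.
apply/seteqP; split => x /=; last by move=> [y [Ky [sy Ly]]] KL; exact/Ly/KL.
move=> KL; apply: contrapT => noy; apply: KL => y [Ky sy].
by apply: contrapT => Ly; apply: noy; exists y.
Qed.

Lemma weighted_mu_Sigma_usc :
  Sigma_usc S (fun x => fine (@mu R (K x `&` cyl (sigma x))) * c (sigma x)).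
Proof.
move=> t n; rewrite (_ : [set x | _] = \bigcup_(sL : seq bool * seq (seq bool))
    ([set x | sigma x = sL.1] `&` ([set _ | cyl_weight sL.2 * c sL.1 < t] `&`
     ([set _ | c sL.1 = 0] `|` [set x | K x `&` cyl sL.1 `<=` cyl_cover sL.2])))).
  apply: Sigma0_bigcup => -[s L] _; apply/Sigma0_clopen/gen_clopenI => //.
  apply/gen_clopenI; first exact: gen_clopen_const.
  by apply/gen_clopenU; [exact: gen_clopen_const|exact: cyl_cover_gen_clopen].
apply/seteqP; split => [x /= mut|x [[s L] _ [/= -> [wt cover]]]]; last first.
  apply: le_lt_trans wt; case: cover => [->|KL]; first by rewrite !mulr0.
  exact/ler_wpM2r/fine_mu_le_weight.
have [c0|cn0] := eqVneq (c (sigma x)) 0.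
  exists (sigma x, [::]) => //=; move: mut; rewrite c0 !mulr0 => t0.
  by split; [|split; [|left]].
have cpos : 0 < c (sigma x) by rewrite lt_neqAle eq_sym cn0 c_ge0.
move: mut; rewrite -ltr_pdivlMr // => /compact_fine_mu_lt [|L KL wt].
  exact/compact_closedI/(cyl_clopen _).2.
by exists (sigma x, L) => //=; split; [|split; [rewrite -ltr_pdivlMr|right]].
Qed.

End MeasureSemicontinuity.

Section ProductSpaces.
Context {R : realType}.

Definition XA_mu (p : XA R) : R :=
  fine (@mu R (proj1_sig p.1.1.1 `&` cyl (restr p.1.1.2 p.1.2))).
Definition XA_r (p : XA R) : R := proj1_sig p.2.

Definition XB_ratio n (p : XB R) : R :=
  fine (@mu R (proj1_sig p.1.1 `&` cyl (restr p.1.2 n))) /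
  fine (@mu R (cyl (restr p.1.2 n))).
Definition XB_r (p : XB R) : R := proj1_sig p.2.

Lemma XA_vietoris U : open U ->
  gen_open XA_sub [set p : XA R | proj1_sig p.1.1.1 `<=` U] /\
  gen_open XA_sub [set p : XA R | proj1_sig p.1.1.1 `&` U !=set0].
Proof.
move=> oU; split; apply: gen_open_sub; left.
  exists [set K : Kspace | proj1_sig K `<=` U]; split => //.
  by exists U; split => //; left.
exists [set K : Kspace | proj1_sig K `&` U !=set0]; split => //.
by exists U; split => //; right.
Qed.

Lemma XB_vietoris U : open U ->
  gen_open XB_sub [set p : XB R | proj1_sig p.1.1 `<=` U] /\
  gen_open XB_sub [set p : XB R | proj1_sig p.1.1 `&` U !=set0].
Proof.
move=> oU; split; apply: gen_open_sub; left.
  exists [set K : Kspace | proj1_sig K `<=` U]; split => //.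
  by exists U; split => //; left.
exists [set K : Kspace | proj1_sig K `&` U !=set0]; split => //.
by exists U; split => //; right.
Qed.

Lemma XA_restr_clopen s : gen_clopen XA_sub [set p : XA R | restr p.1.1.2 p.1.2 = s].
Proof.
rewrite (_ : [set p | _] = [set p | cyl s p.1.1.2] `&` [set p | size s = p.1.2]).
  have [oc cc] := cyl_clopen s.
  apply: gen_clopenI; split; apply: gen_open_sub; right.
  - by left; exists (cyl s).
  - by left; exists (~` cyl s); rewrite openC.
  - by right; left; exists [set n | size s = n].
  - by right; left; exists (~` [set n | size s = n]).
by apply/seteqP; split => p /restr_eqP.
Qed.

Lemma XB_restr_clopen n s : gen_clopen XB_sub [set p : XB R | restr p.1.2 n = s].
Proof.
rewrite (_ : [set p | _] = [set p | cyl s p.1.2] `&` [set _ | size s = n]).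
  have [oc cc] := cyl_clopen s.
  apply: gen_clopenI; last exact: gen_clopen_const.
  by split; apply: gen_open_sub; right; left; [exists (cyl s)|exists (~` cyl s); rewrite openC].
by apply/seteqP; split => p /restr_eqP.
Qed.

Lemma XA_mu_usc : Sigma_usc XA_sub XA_mu.
Proof.
have := weighted_mu_Sigma_usc (R := R) (fun p : XA R => proj2_sig p.1.1.1) XA_vietoris
  XA_restr_clopen (fun _ => ler01).
by under eq_fun do rewrite mulr1.
Qed.

Lemma XB_ratio_usc n : Sigma_usc XB_sub (XB_ratio n).
Proof.
apply: (weighted_mu_Sigma_usc (c := fun s => (fine (@mu R (cyl s)))^-1)
  (fun p : XB R => proj2_sig p.1.1) XB_vietoris
  (XB_restr_clopen n)) => s.
by rewrite invr_ge0 fine_ge0 // mu_ge0.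
Qed.

Lemma XA_r_semicontinuous : Sigma_usc XA_sub XA_r /\ Sigma_lsc XA_sub XA_r.
Proof.
apply: open_Sigma_semicontinuous => t; apply: gen_open_sub; right; right; right.
  by exists [set x | x < t]; split => //; exact: open_lt.
by exists [set x | t < x]; split => //; exact: open_gt.
Qed.

Lemma XB_r_semicontinuous : Sigma_usc XB_sub XB_r /\ Sigma_lsc XB_sub XB_r.
Proof.
apply: open_Sigma_semicontinuous => t; apply: gen_open_sub; right; right.
  by exists [set x | x < t]; split => //; exact: open_lt.
by exists [set x | t < x]; split => //; exact: open_gt.
Qed.

Lemma A_ltE : @A_lt R = [set p | XA_mu p < XA_r p].
Proof. by apply/seteqP; split => p; rewrite /A_lt /= muEfine lte_fin. Qed.

Lemma A_gtE : @A_gt R = [set p | XA_r p < XA_mu p].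
Proof. by apply/seteqP; split => p; rewrite /A_gt /= muEfine lte_fin. Qed.

End ProductSpaces.

Local Close Scope ring_scope.
Local Close Scope classical_set_scope.

Theorem lemma3p1 (R : realType) :
  (* (a) *)
  (Sigma0 (@XA_open R) 1 (@A_lt R) /\ Pi0 (@XA_open R) 1 (@A_ge R) /\
   Pi0 (@XA_open R) 2 (@A_le R) /\ Sigma0 (@XA_open R) 2 (@A_gt R) /\
   Pi0 (@XA_open R) 2 (@A_eq R)) /\
  (* (b) *)
  (Pi0 (@XB_open R) 2 (@Bminus_le R) /\
   Pi0 (@XB_open R) 3 (@Bminus_ge R) /\ Pi0 (@XB_open R) 3 (@Bplus_ge R) /\
   Pi0 (@XB_open R) 4 (@Bplus_le R) /\
   Sigma0 (@XB_open R) 2 (@Bminus_gt R) /\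
   Sigma0 (@XB_open R) 3 (@Bminus_lt R) /\ Sigma0 (@XB_open R) 3 (@Bplus_lt R) /\
   Sigma0 (@XB_open R) 4 (@Bplus_gt R) /\
   Pi0 (@XB_open R) 4 (@B_eq R)).
Proof.
have [rA_usc rA_lsc] := @XA_r_semicontinuous R.
have [rB_usc rB_lsc] := @XB_r_semicontinuous R.
have A_lt_S n : Sigma0 (@XA_open R) n.+1 (@A_lt R).
  by rewrite A_ltE; exact: lt_Sigma0 XA_mu_usc n.
have A_gt_S : Sigma0 (@XA_open R) 2 (@A_gt R) by rewrite A_gtE; exact: gt_Sigma0 XA_mu_usc 0.
have Bm_gt_S : Sigma0 (@XB_open R) 2 (@Bminus_gt R) :=
  lt_liminf_Sigma0 rB_usc XB_ratio_usc 0.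
have Bm_lt_S n : Sigma0 (@XB_open R) n.+3 (@Bminus_lt R) :=
  liminf_lt_Sigma0 rB_lsc XB_ratio_usc n.
have Bp_lt_S : Sigma0 (@XB_open R) 3 (@Bplus_lt R) := limsup_lt_Sigma0 rB_lsc XB_ratio_usc 0.
have Bp_gt_S : Sigma0 (@XB_open R) 4 (@Bplus_gt R) := lt_limsup_Sigma0 rB_usc XB_ratio_usc 0.
split.
  split; first exact: A_lt_S.
  split; first exact: Pi0_le (A_lt_S 0).
  split; first exact: Pi0_le A_gt_S.
  by split; last exact: Pi0_setI (Pi0_le A_gt_S) (Pi0_le (A_lt_S 1)).
split; first exact: Pi0_le Bm_gt_S.
split; first exact: Pi0_le (Bm_lt_S 0).
split; first exact: Pi0_le Bp_lt_S.
split; first exact: Pi0_le Bp_gt_S.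
split; first exact: Bm_gt_S.
split; first exact: Bm_lt_S.
split; first exact: Bp_lt_S.
split; first exact: Bp_gt_S.
exact: Pi0_setI (Pi0_le Bp_gt_S) (Pi0_le (Bm_lt_S 1)).
Qed.
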